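(* Let $I\subset\mathbb{R}$ be an open interval, $W\subset I$ a countable dense subset, $\mathrm{gr}\colon W\to\mathbb{N}$ a grading with finite fibers, $K>1$, and give the fractured interval $\check I$ the division metric $d$ with steepness $K$. Suppose there are constants $M,\alpha>0$ with $\mathrm{gap}(r)\ge M r^\alpha$ for all $r>0$. Let $X$ be a metric space and $f\colon\check I\to X$ a function with $f = \tilde f\circ\pi|_{\check I}$ for some $\tilde f\colon I\to X$ (equivalently, $f(w^L)=f(w^R)$ for all $w\in W$). If $f$ is Hölder with exponent $\nu>0$ and constant $C$ (i.e. $d_X(f(s),f(t))\le C\,d(s,t)^\nu$), then $\tilde f$ is Hölder with exponent $\nu/\alpha$ with respect to the Euclidean metric on $I$: $d_X(\tilde f(a),\tilde f(b))\le \frac{2C}{M^{\nu/\alpha}}|b-a|^{\nu/\alpha}$ for all $a,b\in I$.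
   Context: The divided interval of $I$ at $W$ is $\hat I = \{w^{L}, \hat w, w^{R} : w\in W\}\sqcup (I\smallsetminus W)$, with $\pi\colon\hat I\to I$ sending $w^L,\hat w,w^R$ to $w$ and fixing $I\smallsetminus W$, totally ordered so that $\pi$ is order preserving and $w^L<\hat w<w^R$. For $a,b\in\hat I\cup\{\pm\infty\}$, $(a,b)=\{s: a<s<b\}$; basis intervals are the nonempty $(a,b)$ other than those with $a=w^L$ or $b=w^R$, and they generate the topology. The fractured interval is $\check I=\hat I\smallsetminus\{\hat w:w\in W\}$. The height of $\hat w$ is $K^{-\mathrm{gr}(w)}$, all other points have height $0$; the division metric is $d(a,b)=$ maximum height of points of $(a,b)\subset\hat I$ for $a<b$ in $\check I$. Let $W_{\ge r}=\{w\in W: K^{-\mathrm{gr}(w)}\ge r\}$ and $\mathrm{gap}(r)$ be the minimum Euclidean distance between distinct points of $W_{\ge r}$ (with $\mathrm{gap}(r)=+\infty$ if $W_{\ge r}$ has fewer than two points). *)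

From Stdlib Require Import Reals Lra ClassicalEpsilon.
Open Scope R_scope.

(** Open interval of R with possibly infinite endpoints (None = -oo / +oo). *)
Definition in_interval (lo hi : option R) (x : R) : Prop :=
  match lo with Some l => l < x | None => True end /\
  match hi with Some h => x < h | None => True end.

Definition countable_set (W : R -> Prop) : Prop :=
  exists e : nat -> R, forall w, W w -> exists n, e n = w.

Record is_metric {X : Type} (dX : X -> X -> R) : Prop := {
  metric_nonneg : forall x y, 0 <= dX x y;
  metric_eq0 : forall x y, dX x y = 0 <-> x = y;
  metric_sym : forall x y, dX x y = dX y x;
  metric_triangle : forall x y z, dX x z <= dX x y + dX y z }.

(** Points of the divided interval: a real [x] plus a tag.
    For w in W : (w,TL) = w^L, (w,TM) = \hat w, (w,TR) = w^R.
    For x in I \ W : the point x is represented by (x,TM). *)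
Inductive tag := TL | TM | TR.
Definition tag_rank (t : tag) : nat := match t with TL => 0 | TM => 1 | TR => 2 end.

Definition hpt := (R * tag)%type.

Definition in_divided (lo hi : option R) (W : R -> Prop) (p : hpt) : Prop :=
  in_interval lo hi (fst p) /\ (~ W (fst p) -> snd p = TM).

Definition in_fractured (lo hi : option R) (W : R -> Prop) (p : hpt) : Prop :=
  in_divided lo hi W p /\ ~ (W (fst p) /\ snd p = TM).

Definition hlt (p q : hpt) : Prop :=
  fst p < fst q \/ (fst p = fst q /\ (tag_rank (snd p) < tag_rank (snd q))%nat).

Definition height (W : R -> Prop) (gr : R -> nat) (K : R) (p : hpt) : R :=
  match excluded_middle_informative (W (fst p) /\ snd p = TM) with
  | left _ => / K ^ (gr (fst p))
  | right _ => 0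
  end.

Definition is_max (S : R -> Prop) (r : R) : Prop :=
  S r /\ forall y, S y -> y <= r.

Definition heights_between (lo hi : option R) (W : R -> Prop) (gr : R -> nat) (K : R)
  (a b : hpt) (y : R) : Prop :=
  exists p, in_divided lo hi W p /\ hlt a p /\ hlt p b /\ y = height W gr K p.

Definition division_metric (lo hi : option R) (W : R -> Prop) (gr : R -> nat) (K : R)
  (a b : hpt) : R :=
  let mx (u v : hpt) := epsilon (inhabits 0) (is_max (heights_between lo hi W gr K u v)) in
  match excluded_middle_informative (hlt a b) with
  | left _ => mx a b
  | right _ =>
      match excluded_middle_informative (hlt b a) with
      | left _ => mx b a
      | right _ => 0
      end
  end.

(** Real power x^y for x >= 0 with the convention 0^y = 0 (y > 0). *)
Definition rpow (x y : R) : R := if Req_EM_T x 0 then 0 else Rpower x y.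

(** gap(r) >= g : every two distinct points of W_{>= r} are at Euclidean
    distance >= g (gap(r) is the minimum of these distances, +oo if there are
    fewer than two such points). *)
Definition gap_ge (W : R -> Prop) (gr : R -> nat) (K r g : R) : Prop :=
  forall w1 w2, W w1 -> W w2 -> w1 <> w2 ->
    / K ^ (gr w1) >= r -> / K ^ (gr w2) >= r -> Rabs (w1 - w2) >= g.

From Stdlib Require Import Reals Lra ClassicalEpsilon Classical Arith Wf_nat Lia.
Open Scope R_scope.

(* For a < b, let w0 be the point of W in (a, b) of least grade, i.e. of
   greatest height, and let r be defined by M r^alpha = b - a.  Two points of
   W in (a, b) are closer than b - a, so by the gap condition every other
   point of W in (a, b) has height < r.  Hence the division distances from
   a to w0^L and from w0^R to b are at most r, and since f(w0^L) = f(w0^R),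
   the triangle inequality gives d_X(f~ a, f~ b) <= 2 C r^nu
   = 2 C M^(-nu/alpha) (b - a)^(nu/alpha). *)

Lemma ex_min_measure {A : Type} (P : A -> Prop) (g : A -> nat) :
  (exists x, P x) -> exists x0, P x0 /\ forall x, P x -> (g x0 <= g x)%nat.
Proof.
  intros [x Px].
  assert (from_level : forall n, (exists x, P x /\ g x = n) ->
            exists x0, P x0 /\ forall x, P x -> (g x0 <= g x)%nat).
  { intro n; induction n as [n IH] using lt_wf_ind; intros [x1 [Px1 <-]].
    destruct (classic (exists x, P x /\ (g x < g x1)%nat)) as [[x2 [Px2 lt]]|none].
    - exact (IH _ lt (ex_intro _ x2 (conj Px2 eq_refl))).
    - exists x1; split; [exact Px1|]; intros x3 Px3.
      apply not_gt; intro lt; apply none; eauto. }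
  exact (from_level _ (ex_intro _ x (conj Px eq_refl))).
Qed.

Lemma in_interval_between lo hi u v x :
  in_interval lo hi u -> in_interval lo hi v -> u < x < v -> in_interval lo hi x.
Proof. destruct lo, hi; unfold in_interval; intros; lra. Qed.

Lemma inv_pow_pos (K : R) (n : nat) : 1 < K -> 0 < / K ^ n.
Proof. intros; apply Rinv_0_lt_compat, pow_lt; lra. Qed.

Lemma inv_pow_le (K : R) (m n : nat) : 1 < K -> (m <= n)%nat -> / K ^ n <= / K ^ m.
Proof.
  intros K_gt1 mn; apply Rinv_le_contravar; [apply pow_lt; lra|].
  apply Rle_pow; [lra | exact mn].
Qed.

Lemma Rpower_pos x y : 0 < Rpower x y.
Proof. apply exp_pos. Qed.

Lemma Rpower_div x y z : 0 < x -> 0 < y -> Rpower (x / y) z = Rpower x z / Rpower y z.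
Proof.
  intros x_pos y_pos; unfold Rdiv.
  rewrite <- Rpower_mult_distr by (auto; apply Rinv_0_lt_compat; exact y_pos).
  f_equal; unfold Rpower; rewrite ln_Rinv, <- exp_Ropp by exact y_pos.
  f_equal; ring.
Qed.

Lemma rpow_pos_Rpower x y : 0 < x -> rpow x y = Rpower x y.
Proof. intro x_pos; unfold rpow; destruct (Req_EM_T x 0); [lra | reflexivity]. Qed.

Section DivisionMetric.

Variables (lo hi : option R) (W : R -> Prop) (gr : R -> nat) (K : R).
Hypothesis K_gt1 : 1 < K.
Hypothesis W_dense : forall a b, in_interval lo hi a -> in_interval lo hi b -> a < b ->
  exists w, W w /\ a < w < b.

(* A right end [s] (= u^R if u is in W) and a left end [t] (= v^L if v is in
   W) of a gap of \hat I: the points strictly between them are exactly those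
   lying over the open real interval (fst s, fst t). *)
Definition right_end (s : hpt) : Prop := in_divided lo hi W s /\ (W (fst s) -> snd s = TR).
Definition left_end (t : hpt) : Prop := in_divided lo hi W t /\ (W (fst t) -> snd t = TL).

Lemma hlt_ends_fst (s t p : hpt) :
  right_end s -> left_end t -> in_divided lo hi W p -> hlt s p -> hlt p t ->
  fst s < fst p < fst t.
Proof.
  intros [[_ Ds] Rs] [[_ Dt] Lt] [_ Dp] sp pt; split.
  - destruct sp as [lt|[E rk]]; [exact lt|exfalso].
    destruct (classic (W (fst s))) as [Ws|Ws].
    + rewrite (Rs Ws) in rk; destruct (snd p); simpl in rk; lia.
    + rewrite (Ds Ws) in rk; rewrite E in Ws; rewrite (Dp Ws) in rk; simpl in rk; lia.
  - destruct pt as [lt|[E rk]]; [exact lt|exfalso].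
    destruct (classic (W (fst t))) as [Wt|Wt].
    + rewrite (Lt Wt) in rk; simpl in rk; lia.
    + rewrite (Dt Wt) in rk; rewrite <- E in Wt; rewrite (Dp Wt) in rk; simpl in rk; lia.
Qed.

Section MinGrade.

Variables (s t : hpt) (w0 : R).
Hypotheses (s_end : right_end s) (t_end : left_end t) (W_w0 : W w0)
  (w0_between : fst s < w0 < fst t)
  (w0_min : forall w, W w -> fst s < w < fst t -> (gr w0 <= gr w)%nat).

Lemma heights_between_is_max : is_max (heights_between lo hi W gr K s t) (/ K ^ gr w0).
Proof.
  split.
  - exists (w0, TM); split; [split|].
    + exact (in_interval_between _ _ _ _ _
               (proj1 (proj1 s_end)) (proj1 (proj1 t_end)) w0_between).
    + simpl; intro; contradiction.
    + split; [left; simpl; lra|]; split; [left; simpl; lra|].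
      unfold height; simpl; destruct (excluded_middle_informative _) as [_|N];
        [reflexivity | exfalso; tauto].
  - intros y [p [Dp [sp [pt ->]]]].
    pose proof (hlt_ends_fst s t p s_end t_end Dp sp pt) as p_between.
    unfold height; destruct (excluded_middle_informative _) as [[Wp _]|_].
    + exact (inv_pow_le K _ _ K_gt1 (w0_min _ Wp p_between)).
    + left; exact (inv_pow_pos K _ K_gt1).
Qed.

Lemma division_metric_min_grade : division_metric lo hi W gr K s t = / K ^ gr w0.
Proof.
  unfold division_metric; cbv zeta.
  destruct (excluded_middle_informative (hlt s t)) as [_|N]; [|exfalso; apply N; left; lra].
  pose proof (epsilon_spec (inhabits 0) _ (ex_intro _ _ heights_between_is_max)) as [y_in y_max].
  destruct heights_between_is_max as [m_in m_max].
  apply Rle_antisym; [exact (m_max _ y_in) | exact (y_max _ m_in)].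
Qed.

End MinGrade.

Lemma division_metric_bound (s t : hpt) (B : R) :
  right_end s -> left_end t -> fst s < fst t ->
  (forall w, W w -> fst s < w < fst t -> / K ^ gr w <= B) ->
  0 < division_metric lo hi W gr K s t <= B.
Proof.
  intros s_end t_end st heights_le.
  destruct (ex_min_measure (fun w => W w /\ fst s < w < fst t) gr) as [w0 [[W_w0 w0_in] w0_min]].
  { exact (W_dense _ _ (proj1 (proj1 s_end)) (proj1 (proj1 t_end)) st). }
  rewrite (division_metric_min_grade s t w0 s_end t_end W_w0 w0_in)
    by (intros w Ww w_in; exact (w0_min w (conj Ww w_in))).
  split; [exact (inv_pow_pos K _ K_gt1) | exact (heights_le _ W_w0 w0_in)].
Qed.

Lemma in_fractured_intro (u : R) (tg : tag) :
  in_interval lo hi u -> (W u -> tg <> TM) -> (~ W u -> tg = TM) ->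
  in_fractured lo hi W (u, tg).
Proof.
  intros Iu side mid; split; [split; [exact Iu | exact mid]|].
  simpl; intros [Wu E]; exact (side Wu E).
Qed.

Definition lift_R (u : R) : hpt := (u, if excluded_middle_informative (W u) then TR else TM).
Definition lift_L (u : R) : hpt := (u, if excluded_middle_informative (W u) then TL else TM).

Lemma lift_R_fractured u : in_interval lo hi u -> in_fractured lo hi W (lift_R u).
Proof.
  intro Iu; unfold lift_R; apply in_fractured_intro; auto;
    destruct (excluded_middle_informative (W u)); easy.
Qed.

Lemma lift_L_fractured u : in_interval lo hi u -> in_fractured lo hi W (lift_L u).
Proof.
  intro Iu; unfold lift_L; apply in_fractured_intro; auto;
    destruct (excluded_middle_informative (W u)); easy.
Qed.

Lemma lift_R_right_end u : in_interval lo hi u -> right_end (lift_R u).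
Proof.
  intro Iu; split; [exact (proj1 (lift_R_fractured u Iu))|].
  unfold lift_R; simpl; destruct (excluded_middle_informative (W u)); easy.
Qed.

Lemma lift_L_left_end u : in_interval lo hi u -> left_end (lift_L u).
Proof.
  intro Iu; split; [exact (proj1 (lift_L_fractured u Iu))|].
  unfold lift_L; simpl; destruct (excluded_middle_informative (W u)); easy.
Qed.

Lemma gap_height_lt (r a b w w0 : R) :
  gap_ge W gr K r (b - a) -> W w -> W w0 -> a < w < b -> a < w0 < b -> w <> w0 ->
  / K ^ gr w <= / K ^ gr w0 -> / K ^ gr w < r.
Proof.
  intros gap Ww Ww0 w_in w0_in neq le.
  apply Rnot_le_lt; intro r_le.
  apply (Rlt_not_ge _ _ (Rabs_def1 (w - w0) (b - a) ltac:(lra) ltac:(lra))).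
  apply gap; auto; lra.
Qed.

End DivisionMetric.

Section HolderTransfer.

Variables (lo hi : option R) (W : R -> Prop) (gr : R -> nat) (K M alpha : R)
  (X : Type) (dX : X -> X -> R) (f : hpt -> X) (ft : R -> X) (nu C : R).
Hypotheses
  (W_dense : forall a b, in_interval lo hi a -> in_interval lo hi b -> a < b ->
     exists w, W w /\ a < w < b)
  (K_gt1 : 1 < K) (M_pos : 0 < M) (alpha_pos : 0 < alpha)
  (gap : forall r, 0 < r -> gap_ge W gr K r (M * Rpower r alpha))
  (dX_metric : is_metric dX)
  (f_factors : forall p, in_fractured lo hi W p -> f p = ft (fst p))
  (nu_pos : 0 < nu)
  (f_holder : forall s t, in_fractured lo hi W s -> in_fractured lo hi W t ->
     dX (f s) (f t) <= C * rpow (division_metric lo hi W gr K s t) nu).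

Lemma holder_piece (s t : hpt) (r : R) :
  in_fractured lo hi W s -> in_fractured lo hi W t ->
  0 < division_metric lo hi W gr K s t <= r ->
  dX (ft (fst s)) (ft (fst t)) <= C * Rpower r nu.
Proof.
  intros Fs Ft [d_pos d_le].
  pose proof (f_holder s t Fs Ft) as hol.
  rewrite (f_factors s Fs), (f_factors t Ft), rpow_pos_Rpower in hol by exact d_pos.
  assert (C_nonneg : 0 <= C).
  { pose proof (metric_nonneg _ dX_metric (ft (fst s)) (ft (fst t))).
    pose proof (Rpower_pos (division_metric lo hi W gr K s t) nu).
    nra. }
  eapply Rle_trans; [exact hol|].
  apply Rmult_le_compat_l; [exact C_nonneg|].
  apply Rle_Rpower_l; lra.
Qed.

Lemma holder_transfer_lt a b :
  in_interval lo hi a -> in_interval lo hi b -> a < b ->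
  dX (ft a) (ft b) <= 2 * C / Rpower M (nu / alpha) * Rpower (b - a) (nu / alpha).
Proof.
  intros Ia Ib ab.
  set (r := Rpower ((b - a) / M) (/ alpha)).
  assert (r_alpha : M * Rpower r alpha = b - a).
  { unfold r; rewrite Rpower_mult, Rinv_l, Rpower_1 by (apply Rdiv_lt_0_compat || lra; lra).
    field; lra. }
  assert (r_nu : Rpower r nu = Rpower (b - a) (nu / alpha) / Rpower M (nu / alpha)).
  { unfold r; rewrite Rpower_mult, <- Rpower_div by lra; f_equal; unfold Rdiv; ring. }
  pose proof (gap r (Rpower_pos _ _)) as gap_r; rewrite r_alpha in gap_r.
  destruct (ex_min_measure (fun w => W w /\ a < w < b) gr) as [w0 [[W_w0 w0_in] w0_min]].
  { exact (W_dense a b Ia Ib ab). }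
  assert (I_w0 : in_interval lo hi w0) by exact (in_interval_between _ _ _ _ _ Ia Ib w0_in).
  assert (others_low : forall w, W w -> a < w < b -> w <> w0 -> / K ^ gr w <= r).
  { intros w Ww w_in neq; left.
    apply (gap_height_lt W gr K r a b w w0); auto.
    exact (inv_pow_le K _ _ K_gt1 (w0_min w (conj Ww w_in))). }
  assert (F_w0L : in_fractured lo hi W (w0, TL)) by (apply in_fractured_intro; easy).
  assert (F_w0R : in_fractured lo hi W (w0, TR)) by (apply in_fractured_intro; easy).
  assert (left_piece : dX (ft a) (ft w0) <= C * Rpower r nu).
  { apply (holder_piece (lift_R W a) (w0, TL)); [apply lift_R_fractured; exact Ia | exact F_w0L|].
    apply division_metric_bound; auto.
    - apply lift_R_right_end; exact Ia.
    - split; [exact (proj1 F_w0L) | easy].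
    - simpl; lra.
    - simpl; intros w Ww w_in; apply others_low; auto; lra. }
  assert (right_piece : dX (ft w0) (ft b) <= C * Rpower r nu).
  { apply (holder_piece (w0, TR) (lift_L W b)); [exact F_w0R | apply lift_L_fractured; exact Ib|].
    apply division_metric_bound; auto.
    - split; [exact (proj1 F_w0R) | easy].
    - apply lift_L_left_end; exact Ib.
    - simpl; lra.
    - simpl; intros w Ww w_in; apply others_low; auto; lra. }
  pose proof (metric_triangle _ dX_metric (ft a) (ft w0) (ft b)).
  pose proof (Rpower_pos M (nu / alpha)).
  replace (2 * C / Rpower M (nu / alpha) * Rpower (b - a) (nu / alpha))
    with (2 * (C * Rpower r nu)) by (rewrite r_nu; field; lra).
  lra.
Qed.

End HolderTransfer.

Theorem theorem3p10
  (lo hi : option R) (W : R -> Prop) (gr : R -> nat) (K M alpha : R)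
  (X : Type) (dX : X -> X -> R) (f : hpt -> X) (ft : R -> X) (nu C : R) :
  (* W is a countable dense subset of the open interval I *)
  (forall w, W w -> in_interval lo hi w) ->
  countable_set W ->
  (forall a b, in_interval lo hi a -> in_interval lo hi b -> a < b ->
     exists w, W w /\ a < w < b) ->
  (* the grading has finite fibers *)
  (forall n : nat, exists l : list R, forall w, W w -> gr w = n -> List.In w l) ->
  1 < K ->
  0 < M -> 0 < alpha ->
  (forall r, 0 < r -> gap_ge W gr K r (M * Rpower r alpha)) ->
  is_metric dX ->
  (forall p, in_fractured lo hi W p -> f p = ft (fst p)) ->
  0 < nu ->
  (forall s t, in_fractured lo hi W s -> in_fractured lo hi W t ->
     dX (f s) (f t) <= C * rpow (division_metric lo hi W gr K s t) nu) ->
  forall a b, in_interval lo hi a -> in_interval lo hi b ->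
    dX (ft a) (ft b) <= 2 * C / Rpower M (nu / alpha) * rpow (Rabs (b - a)) (nu / alpha).
Proof.
  intros _ _ W_dense _ K_gt1 M_pos alpha_pos gap dX_metric f_factors nu_pos f_holder a b Ia Ib.
  pose proof (holder_transfer_lt lo hi W gr K M alpha X dX f ft nu C
                W_dense K_gt1 M_pos alpha_pos gap dX_metric f_factors nu_pos f_holder) as lt.
  destruct (Rtotal_order a b) as [ab|[<-|ba]].
  - rewrite Rabs_right, rpow_pos_Rpower by lra; exact (lt a b Ia Ib ab).
  - rewrite (proj2 (metric_eq0 _ dX_metric (ft a) (ft a)) eq_refl).
    unfold Rminus; rewrite Rplus_opp_r, Rabs_R0; unfold rpow.
    destruct (Req_EM_T 0 0) as [_|N]; [lra | contradiction].
  - rewrite (metric_sym _ dX_metric), Rabs_left, Ropp_minus_distr, rpow_pos_Rpower by lra.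
    exact (lt b a Ib Ia ba).
Qed.
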